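(* For any prime number $p$ and any integer $n\ge 1$, $F(p,n)=p^{n-1}(p^n+p-1)$.
   Context: For a prime $p$ and $n\ge 1$, $r(p,n)$ denotes the number of orbits of the left action of $\mathrm{SL}(2,\mathbb{Z})$ on $(\mathbb{Z}_p\times\mathbb{Z}_p)^n$, where elements of $(\mathbb{Z}_p\times\mathbb{Z}_p)^n$ are viewed as $2\times n$ matrices over $\mathbb{Z}_p$ and a matrix in $\mathrm{SL}(2,\mathbb{Z})$ acts by left matrix multiplication with entries reduced modulo $p$. Define $F(p,n):=r(p,n+1)-r(p,n)$ for $n\ge 1$. *)

From mathcomp Require Import all_boot all_order all_algebra.
From Stdlib Require Import ClassicalDescription.
Set Implicit Arguments. Unset Strict Implicit. Unset Printing Implicit Defensive.
Import GRing.Theory.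
Local Open Scope ring_scope.

(* Elements of (Z_p x Z_p)^n are 2 x n matrices over 'F_p (= Z/pZ for prime p).
   A matrix M in SL(2,Z) acts by left multiplication with entries reduced mod p. *)

Definition reduce_mx (p : nat) (M : 'M[int]_2) : 'M['F_p]_2 :=
  map_mx (fun z : int => z%:~R) M.

Definition sl2_orbit_rel (p n : nat) (x y : 'M['F_p]_(2, n)) : Prop :=
  exists M : 'M[int]_2, \det M = 1 /\ reduce_mx p M *m x = y.

Definition sl2_orbit (p n : nat) (x : 'M['F_p]_(2, n)) : {set 'M['F_p]_(2, n)} :=
  [set y | if excluded_middle_informative (sl2_orbit_rel x y) then true else false].

Definition r (p n : nat) : nat :=
  #|[set sl2_orbit x | x : 'M['F_p]_(2, n)]|.

Definition F (p n : nat) : int := (r p n.+1)%:Z - (r p n)%:Z.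

(* Reduction mod p maps SL(2,Z) onto SL(2,F_p), so r(p,n) counts SL(2,F_p)-orbits
   of 2 x n matrices.  Split off the first column: if it is zero, the remaining
   columns form an arbitrary orbit of 2 x n matrices; otherwise it can be moved
   to e1, whose stabilizer is the unipotent group U = {[1 b; 0 1]}.  Hence
   r(p,n+1) = r(p,n) + #(U-orbits on 2 x n matrices).  A U-orbit has size 1 when
   the second row vanishes and size p otherwise, so summing 1/|orbit| over all
   matrices gives p^n + (p^(2n) - p^n)/p such orbits. *)

From mathcomp Require Import all_boot all_order all_algebra.
From mathcomp Require Import ring.
From Stdlib Require Import ClassicalDescription.
Set Implicit Arguments. Unset Strict Implicit. Unset Printing Implicit Defensive.
Import GRing.Theory Num.Theory.
Local Open Scope ring_scope.

Lemma ord2P (i : 'I_2) : i = 0 \/ i = 1.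
Proof. by case: i => [[|[|//]]] Hi; [left|right]; apply: val_inj. Qed.

Lemma lift0_ord2 : lift 0 0 = 1 :> 'I_2.
Proof. exact: val_inj. Qed.

Section Matrix2.
Variable R : comNzRingType.

Definition mk2 (a b c d : R) : 'M[R]_2 :=
  \matrix_(i, j) if i == 0 then (if j == 0 then a else b)
                 else (if j == 0 then c else d).

Lemma mk2E (A : 'M[R]_2) : A = mk2 (A 0 0) (A 0 1) (A 1 0) (A 1 1).
Proof.
by apply/matrixP => i j; rewrite mxE; case: (ord2P i) => ->; case: (ord2P j) => ->.
Qed.

Lemma mul_mk2 a b c d a' b' c' d' :
  mk2 a b c d *m mk2 a' b' c' d' =
  mk2 (a * a' + b * c') (a * b' + b * d') (c * a' + d * c') (c * b' + d * d').
Proof.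
apply/matrixP => i j; rewrite !mxE !big_ord_recl big_ord0 !mxE addr0 /=.
by case: (ord2P i) => ->; case: (ord2P j) => ->.
Qed.

Lemma det_mk2 a b c d : \det (mk2 a b c d) = a * d - b * c.
Proof.
rewrite (expand_det_row _ 0) !big_ord_recl big_ord0 /cofactor !det_mx11 !mxE /=.
by rewrite !expr0 !expr1 /=; ring.
Qed.

Lemma mk2_1 : mk2 1 0 0 1 = 1%:M.
Proof.
by apply/matrixP => i j; rewrite !mxE; case: (ord2P i) => ->; case: (ord2P j) => ->.
Qed.

End Matrix2.

Section Lifting.
Variable p : nat.

Lemma reduce_mk2 (a b c d : int) :
  reduce_mx p (mk2 a b c d) = mk2 a%:~R b%:~R c%:~R d%:~R.
Proof.
by apply/matrixP => i j; rewrite !mxE; case: (ord2P i) => ->; case: (ord2P j) => ->.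
Qed.

Lemma det_reduce_mx (M : 'M[int]_2) : \det (reduce_mx p M) = (\det M)%:~R.
Proof. by rewrite [M]mk2E reduce_mk2 !det_mk2 intrB !intrM. Qed.

Definition SL2Z_reduction (A : 'M['F_p]_2) :=
  exists2 M : 'M[int]_2, \det M = 1 & reduce_mx p M = A.

Lemma SL2Z_reduction_mul A B :
  SL2Z_reduction A -> SL2Z_reduction B -> SL2Z_reduction (A *m B).
Proof.
move=> [M dM <-] [N dN <-]; exists (M *m N); first by rewrite det_mulmx dM dN mulr1.
by rewrite [M]mk2E [N]mk2E mul_mk2 !reduce_mk2 mul_mk2 !intrD !intrM.
Qed.

Lemma SL2Z_reduction_upper (t : 'F_p) : SL2Z_reduction (mk2 1 t 0 1).
Proof.
exists (mk2 1 (t : nat)%:Z 0 1); first by rewrite det_mk2; ring.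
by rewrite reduce_mk2; congr mk2; exact: natr_Zp.
Qed.

Lemma SL2Z_reduction_lower (t : 'F_p) : SL2Z_reduction (mk2 1 0 t 1).
Proof.
exists (mk2 1 0 (t : nat)%:Z 1); first by rewrite det_mk2; ring.
by rewrite reduce_mk2; congr mk2; exact: natr_Zp.
Qed.

(* SL(2, F_p) is generated by elementary matrices, which visibly lift to SL(2, Z). *)
Lemma det1_SL2Z_reduction (A : 'M['F_p]_2) : \det A = 1 -> SL2Z_reduction A.
Proof.
have SL2Z_red_c_neq0 (a b c d : 'F_p) : a * d - b * c = 1 -> c != 0 ->
    SL2Z_reduction (mk2 a b c d).
  move=> hd hc.
  have -> : mk2 a b c d = mk2 1 ((a - 1) / c) 0 1 *m mk2 1 0 c 1 *m
                          mk2 1 ((d - 1) / c) 0 1.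
    have -> : b = (a * d - 1) / c by rewrite -hd; field.
    by rewrite !mul_mk2; congr mk2; field.
  apply: SL2Z_reduction_mul; last exact: SL2Z_reduction_upper.
  by apply: SL2Z_reduction_mul; [apply: SL2Z_reduction_upper|apply: SL2Z_reduction_lower].
rewrite [A]mk2E det_mk2; move: (A 0 0) (A 0 1) (A 1 0) (A 1 1) => a b c d hd.
have [c0|] := eqVneq c 0; last exact: SL2Z_red_c_neq0.
have -> : mk2 a b c d = mk2 1 0 (-1) 1 *m mk2 a b (a + c) (b + d).
  by rewrite mul_mk2; congr mk2; ring.
apply: SL2Z_reduction_mul; first exact: SL2Z_reduction_lower.
apply: SL2Z_red_c_neq0; first by rewrite -hd; ring.
rewrite c0 addr0; apply: contra_eq_neq hd => ->.
by rewrite c0 !mul0r mulr0 subrr eq_sym oner_neq0.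
Qed.

End Lifting.

Section MatrixOrbits.
Variables (R : finComNzRingType) (m : nat) (G : {set 'M[R]_m}).
Hypothesis G1 : 1%:M \in G.
Hypothesis GM : {in G &, forall A B, A *m B \in G}.
Hypothesis GV : {in G, forall A, exists2 B, B \in G & B *m A = 1%:M}.

Definition mx_orbit n (x : 'M[R]_(m, n)) := [set A *m x | A in G].

Lemma mx_orbit_refl n (x : 'M[R]_(m, n)) : x \in mx_orbit x.
Proof. by apply/imsetP; exists 1%:M; rewrite ?mul1mx. Qed.

Lemma mx_orbit_trans n (x y : 'M[R]_(m, n)) : y \in mx_orbit x -> mx_orbit y = mx_orbit x.
Proof.
move=> /imsetP [B GB ->]; have [C GC CB1] := GV GB.
apply/setP => z; apply/imsetP/imsetP => -[A GA ->].
  by exists (A *m B); rewrite ?mulmxA ?GM.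
by exists (A *m C); rewrite ?GM // -mulmxA (mulmxA C) CB1 mul1mx.
Qed.

Lemma eq_mx_orbit n (x y : 'M[R]_(m, n)) : (mx_orbit x == mx_orbit y) = (y \in mx_orbit x).
Proof.
apply/eqP/idP => [->|/mx_orbit_trans -> //]; exact: mx_orbit_refl.
Qed.

End MatrixOrbits.

Section SpecialLinear.
Variables (R : finComUnitRingType) (m : nat).

Definition SL : {set 'M[R]_m} := [set A | \det A == 1].

Lemma SL1 : 1%:M \in SL.
Proof. by rewrite inE det1. Qed.

Lemma SLM : {in SL &, forall A B, A *m B \in SL}.
Proof. by move=> A B; rewrite !inE det_mulmx => /eqP -> /eqP ->; rewrite mulr1. Qed.

Lemma SL_unitmx A : A \in SL -> A \in unitmx.
Proof. by rewrite inE unitmxE => /eqP ->; rewrite unitr1. Qed.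

Lemma SLV : {in SL, forall A, exists2 B, B \in SL & B *m A = 1%:M}.
Proof.
move=> A SLA; exists (invmx A); last by rewrite mulVmx ?SL_unitmx.
by move: SLA; rewrite !inE det_inv => /eqP ->; rewrite invr1.
Qed.

End SpecialLinear.
Arguments SL {R m}.
Arguments SL1 {R m}.
Arguments SLM {R m}.
Arguments SLV {R m}.

Lemma sl2_orbitE p n (x : 'M['F_p]_(2, n)) : sl2_orbit x = mx_orbit SL x.
Proof.
apply/setP => y; rewrite inE.
case: excluded_middle_informative => [[M [dM eMy]]|noM] /=; apply/esym.
  by rewrite -eMy; apply: imset_f; rewrite inE det_reduce_mx dM.
apply/negP => /imsetP [A]; rewrite inE => /eqP/det1_SL2Z_reduction[M dM eMA] yE.
by apply: noM; exists M; rewrite eMA yE.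
Qed.

Lemma card_imset_eq_ker (T T1 T2 : finType) (f : T -> T1) (g : T -> T2) :
  (forall x y, (f x == f y) = (g x == g y)) -> #|f @: T| = #|g @: T|.
Proof.
move=> fg_ker; pose h (z : T1) := omap g [pick x | f x == z].
have hf x : h (f x) = Some (g x).
  rewrite /h; case: pickP => [x' /eqP fx'x|/(_ x)]; last by rewrite eqxx.
  by congr Some; apply/eqP; rewrite -fg_ker fx'x.
rewrite -[RHS](card_imset _ (@Some_inj _)) -imset_comp.
have -> : (Some \o g) @: T = h @: (f @: T).
  by rewrite -imset_comp; apply: eq_imset => x /=; rewrite hf.
apply/esym/card_in_imset => _ _ /imsetP [x _ ->] /imsetP [y _ ->].
by rewrite !hf => -[] /eqP; rewrite -fg_ker => /eqP.
Qed.

(* Each class O x contributes #|O x| terms equal to 1 / #|O x|. *)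
Lemma card_classes_sum_inv (R : numFieldType) (T : finType) (O : T -> {set T}) :
  (forall x, x \in O x) -> (forall x y, y \in O x -> O y = O x) ->
  (#|[set O x | x in T]|%:R : R) = \sum_x (#|O x|%:R)^-1.
Proof.
move=> Orefl Otrans; rewrite (partition_big_imset O) /= -sum1_card natr_sum.
apply: eq_bigr => _ /imsetP [x0 _ ->].
rewrite (eq_bigl (mem (O x0))); last first.
  by move=> x /=; apply/eqP/idP => [<-|/Otrans //]; apply: Orefl.
rewrite (eq_bigr (fun=> (#|O x0|%:R)^-1)) => [|x /Otrans -> //].
rewrite sumr_const -[RHS]mulr_natr mulVf // pnatr_eq0 -lt0n.
by apply/card_gt0P; exists x0.
Qed.

Section Unipotent.
Variable K : finFieldType.

Definition unip (b : K) : 'M[K]_2 := mk2 1 b 0 1.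
Definition U : {set 'M[K]_2} := [set unip b | b : K].

Lemma unipD b b' : unip b *m unip b' = unip (b + b').
Proof. by rewrite /unip mul_mk2; congr mk2; ring. Qed.

Lemma U1 : 1%:M \in U.
Proof. by apply/imsetP; exists 0; rewrite // /unip mk2_1. Qed.

Lemma UM : {in U &, forall A B, A *m B \in U}.
Proof. by move=> _ _ /imsetP [a _ ->] /imsetP [b _ ->]; rewrite unipD imset_f. Qed.

Lemma UV : {in U, forall A, exists2 B, B \in U & B *m A = 1%:M}.
Proof.
move=> _ /imsetP [b _ ->]; exists (unip (- b)); first exact: imset_f.
by rewrite unipD addNr /unip mk2_1.
Qed.

Lemma unip_mul_row0 n b (W : 'M[K]_(2, n)) j :
  (unip b *m W) 0 j = W 0 j + b * W 1 j.
Proof. by rewrite !mxE !big_ord_recl big_ord0 !mxE /= mul1r addr0 lift0_ord2. Qed.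

Lemma unip_mul_row1 n b (W : 'M[K]_(2, n)) j : (unip b *m W) 1 j = W 1 j.
Proof. by rewrite !mxE !big_ord_recl big_ord0 !mxE /= mul0r add0r mul1r addr0 lift0_ord2. Qed.

Lemma card_mx_orbit_U n (W : 'M[K]_(2, n)) :
  #|mx_orbit U W| = if row 1 W == 0 then 1%N else #|K|.
Proof.
have -> : mx_orbit U W = [set unip b *m W | b : K] by rewrite /mx_orbit -imset_comp.
case: ifP => [/eqP W1_0|/negbT]; last first.
  move=> W1_neq0; rewrite card_imset // => a b /matrixP eqab.
  have [j W1j] : exists j, W 1 j != 0.
    apply/existsP; apply: contraNT W1_neq0 => /existsPn W1_0.
    by apply/eqP/rowP => j; rewrite !mxE; apply/eqP/negPn.
  by move: (eqab 0 j); rewrite !unip_mul_row0 => /addrI /mulIf; apply.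
have W1j j : W 1 j = 0 by have := congr1 (fun v : 'rV_n => v 0 j) W1_0; rewrite !mxE.
suff -> : [set unip b *m W | b : K] = [set W] by rewrite cards1.
apply/setP => y; rewrite inE.
apply/imsetP/eqP => [[b _ ->]|->]; last by exists 0; rewrite // /unip mk2_1 mul1mx.
apply/matrixP => i j; case: (ord2P i) => ->; last exact: unip_mul_row1.
by rewrite unip_mul_row0 W1j mulr0 addr0.
Qed.

End Unipotent.
Arguments U {K}.
Arguments U1 {K}.
Arguments UM {K}.
Arguments UV {K}.

Section FirstColumn.
Variable K : finFieldType.
Local Notation e1 := (delta_mx 0 0 : 'cV[K]_2).

Definition col_completion (c : 'cV[K]_2) : 'M[K]_2 :=
  if c 0 0 != 0 then mk2 (c 0 0) 0 (c 1 0) (c 0 0)^-1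
  else mk2 0 (- (c 1 0)^-1) (c 1 0) 0.

Lemma cV2P (c d : 'cV[K]_2) : c 0 0 = d 0 0 -> c 1 0 = d 1 0 -> c = d.
Proof. by move=> c0 c1; apply/matrixP => i j; rewrite (ord1 j); case: (ord2P i) => ->. Qed.

Lemma col_completion_e1 c : col_completion c *m e1 = c.
Proof.
rewrite -colE /col_completion.
by case: ifP => [_|/negbFE/eqP c0]; apply: cV2P; rewrite !mxE.
Qed.

Lemma col_completion_SL c : c != 0 -> col_completion c \in SL.
Proof.
move=> c_neq0; rewrite inE /col_completion.
case: ifP => [c0|/negbFE/eqP c0]; rewrite det_mk2.
  by rewrite mul0r subr0 mulfV.
have c1 : c 1 0 != 0.
  by apply: contraNneq c_neq0 => c1; apply/eqP/cV2P; rewrite mxE.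
by rewrite mul0r sub0r mulNr opprK mulVf.
Qed.

Lemma SL_stab_e1 (B : 'M[K]_2) : B \in SL -> B *m e1 = e1 -> B \in U.
Proof.
rewrite inE -colE => /eqP detB /matrixP Be1.
have B00 : B 0 0 = 1 by have := Be1 0 0; rewrite !mxE.
have B10 : B 1 0 = 0 by have := Be1 1 0; rewrite !mxE.
have B11 : B 1 1 = 1 by move: detB; rewrite {1}[B]mk2E det_mk2 B00 B10 mul1r mulr0 subr0.
by apply/imsetP; exists (B 0 1); rewrite // {1}[B]mk2E B00 B10 B11.
Qed.

Lemma unip_e1 b : unip b *m e1 = e1.
Proof. by rewrite -colE; apply: cV2P; rewrite !mxE. Qed.

Lemma mx_orbit_SL_mul n A (x : 'M[K]_(2, n)) :
  A \in SL -> mx_orbit SL (A *m x) = mx_orbit SL x.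
Proof. by move=> SLA; apply: mx_orbit_trans (imset_f _ SLA); [apply: SLM|apply: SLV]. Qed.

Lemma mem_mx_orbit_row n (c c' : 'cV[K]_2) (Z Z' : 'M[K]_(2, n)) :
  reflect (exists2 A, A \in SL & A *m c = c' /\ A *m Z = Z')
          (row_mx c' Z' \in mx_orbit SL (row_mx c Z)).
Proof.
apply: (iffP imsetP) => [[A SLA]|[A SLA [Ac AZ]]].
  by rewrite mul_mx_row => /eq_row_mx [-> ->]; exists A.
by exists A; rewrite // mul_mx_row Ac AZ.
Qed.

Lemma mx_orbit_row_normalize n (c : 'cV[K]_2) (Z : 'M[K]_(2, n)) : c != 0 ->
  mx_orbit SL (row_mx c Z) =
  mx_orbit SL (row_mx e1 (invmx (col_completion c) *m Z)).
Proof.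
move/col_completion_SL => SL_C.
rewrite -[RHS](mx_orbit_SL_mul _ SL_C) mul_mx_row mulmxA mulmxV ?SL_unitmx // mul1mx.
by rewrite col_completion_e1.
Qed.

Lemma eq_mx_orbit_row_e1 n (W W' : 'M[K]_(2, n)) :
  (mx_orbit SL (row_mx e1 W) == mx_orbit SL (row_mx e1 W'))
  = (mx_orbit U W == mx_orbit U W').
Proof.
rewrite (eq_mx_orbit SL1 SLM SLV) (eq_mx_orbit U1 UM UV).
apply/mem_mx_orbit_row/imsetP => [[B SLB [Be1 BW]]|[_ /imsetP [b _ ->] BW]].
  by exists B; rewrite // SL_stab_e1.
by exists (unip b); rewrite ?unip_e1 // inE /unip det_mk2 mulr1 mulr0 subr0.
Qed.

Lemma eq_mx_orbit_row0 n (Z Z' : 'M[K]_(2, n)) :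
  (mx_orbit SL (row_mx 0 Z : 'M_(2, 1 + n)) == mx_orbit SL (row_mx 0 Z'))
  = (mx_orbit SL Z == mx_orbit SL Z').
Proof.
rewrite !(eq_mx_orbit SL1 SLM SLV).
apply/mem_mx_orbit_row/imsetP => [[A SLA [_ AZ]]|[A SLA AZ]]; first by exists A.
by exists A; rewrite ?mulmx0.
Qed.

Lemma mx_orbit_row_neq n (c' : 'cV[K]_2) (Z Z' : 'M[K]_(2, n)) : c' != 0 ->
  mx_orbit SL (row_mx 0 Z) != mx_orbit SL (row_mx c' Z').
Proof.
move=> c'_neq0; rewrite (eq_mx_orbit SL1 SLM SLV).
by apply/mem_mx_orbit_row => -[A _ [A0 _]]; move: c'_neq0; rewrite -A0 mulmx0 eqxx.
Qed.

(* A zero first column leaves the remaining columns free up to SL; a nonzero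
   one can be moved to e1, after which they are free up to its stabilizer U. *)
Definition col_split n (X : 'M[K]_(2, 1 + n)) :=
  if lsubmx X == 0 then inl (mx_orbit SL (rsubmx X))
  else inr (mx_orbit U (invmx (col_completion (lsubmx X)) *m rsubmx X)).

Lemma eq_mx_orbit_col_split n (X Y : 'M[K]_(2, 1 + n)) :
  (mx_orbit SL X == mx_orbit SL Y) = (col_split X == col_split Y).
Proof.
rewrite -[X]hsubmxK -[Y]hsubmxK /col_split !row_mxKl !row_mxKr.
move: (lsubmx X) (rsubmx X) (lsubmx Y) (rsubmx Y) => c Z c' Z'.
have [->|c_neq0] := eqVneq c 0; have [->|c'_neq0] := eqVneq c' 0.
- exact: eq_mx_orbit_row0.
- by rewrite (negbTE (mx_orbit_row_neq _ _ _)).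
- by rewrite eq_sym (negbTE (mx_orbit_row_neq _ _ _)).
- rewrite (mx_orbit_row_normalize _ c_neq0) (mx_orbit_row_normalize _ c'_neq0).
  exact: eq_mx_orbit_row_e1.
Qed.

Lemma imset_col_split n :
  [set col_split X | X : 'M[K]_(2, 1 + n)] =
  inl @: [set mx_orbit SL Z | Z : 'M[K]_(2, n)] :|:
  inr @: [set mx_orbit U W | W : 'M[K]_(2, n)].
Proof.
apply/setP => z; apply/imsetP/setUP => [[X _ ->]|].
  by rewrite /col_split; case: ifP => _; [left|right]; rewrite !imset_f.
case=> /imsetP [_ /imsetP [Z _ ->] ->].
  by exists (row_mx 0 Z); rewrite // /col_split row_mxKl eqxx row_mxKr.
have e1_neq0 : e1 != 0 by apply/eqP => /matrixP/(_ 0 0)/eqP; rewrite !mxE oner_eq0.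
exists (row_mx e1 Z); rewrite // /col_split row_mxKl row_mxKr (negbTE e1_neq0).
have -> : col_completion e1 = 1%:M by rewrite /col_completion !mxE /= oner_eq0 invr1 mk2_1.
by rewrite invmx1 mul1mx.
Qed.

Definition SL_orbit_count n := #|[set mx_orbit SL x | x : 'M[K]_(2, n)]|.
Definition U_orbit_count n := #|[set mx_orbit U x | x : 'M[K]_(2, n)]|.

Lemma SL_orbit_countS n :
  SL_orbit_count n.+1 = (SL_orbit_count n + U_orbit_count n)%N.
Proof.
rewrite /SL_orbit_count (card_imset_eq_ker (@eq_mx_orbit_col_split n)).
rewrite imset_col_split cardsU (card_imset _ (@inl_inj _ _)) (card_imset _ (@inr_inj _ _)).
rewrite -[RHS]subn0; congr (_ - _)%N; apply/eqP; rewrite cards_eq0; apply/eqP/setP => z.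
by rewrite !inE; apply/andP => -[/imsetP [a _ ->] /imsetP [b _]].
Qed.

End FirstColumn.

Section CountUnipotentOrbits.
Variable K : finFieldType.
Local Notation q := #|K|.

Lemma card_row1_eq0 n : #|[set W : 'M[K]_(2, n) | row 1 W == 0]| = (q ^ n)%N.
Proof.
pose ext (v : 'rV[K]_n) : 'M[K]_(2, n) := \matrix_(i, j) if i == 0 then v 0 j else 0.
have -> : [set W : 'M[K]_(2, n) | row 1 W == 0] = [set ext v | v : 'rV_n].
  apply/setP => W; rewrite inE; apply/eqP/imsetP => [/rowP W1_0|[v _ ->]].
    exists (row 0 W) => //; apply/matrixP => i j; rewrite !mxE.
    by case: (ord2P i) => -> //=; have := W1_0 j; rewrite !mxE.
  by apply/rowP => j; rewrite !mxE.
rewrite card_imset ?card_mx ?mul1n // => u v /matrixP uv.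
by apply/rowP => j; have := uv 0 j; rewrite !mxE.
Qed.

Lemma U_orbit_count_sum (R : numFieldType) n :
  (U_orbit_count K n)%:R = (q ^ n)%:R + ((q ^ (2 * n))%:R - (q ^ n)%:R) / q%:R :> R.
Proof.
rewrite /U_orbit_count (card_classes_sum_inv R); last first.
- by move=> x y; apply: mx_orbit_trans; [apply: UM|apply: UV].
- by move=> x; apply: mx_orbit_refl; apply: U1.
pose P := [set W : 'M[K]_(2, n) | row 1 W == 0].
rewrite (bigID (mem P)) /=.
rewrite (eq_bigr (fun=> 1)) => [|W]; last first.
  by rewrite inE card_mx_orbit_U => ->; rewrite invr1.
rewrite [X in _ + X](eq_bigr (fun=> q%:R^-1)) => [|W]; last first.
  by rewrite inE card_mx_orbit_U => /negbTE ->.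
have card_notP : #|[predC P]| = (q ^ (2 * n) - q ^ n)%N.
  have := cardC P; rewrite card_mx card_row1_eq0 => <-.
  by rewrite addKn.
have q_gt0 : (0 < q)%N := ltnW (card_finNzRing_gt1 K).
rewrite !sumr_const card_row1_eq0 card_notP -[_^-1 *+ _]mulr_natr natrB.
  by rewrite [_^-1 * _]mulrC.
by rewrite leq_pexp2l // leq_pmull.
Qed.

Lemma U_orbit_countS n :
  U_orbit_count K n.+1 = (q ^ n * (q ^ n.+1 + q - 1))%N.
Proof.
have q_gt0 : (0 < q)%N := ltnW (card_finNzRing_gt1 K).
apply/eqP; rewrite -(eqr_nat rat) U_orbit_count_sum; apply/eqP.
have q_neq0 : (q%:R : rat) != 0 by rewrite pnatr_eq0 -lt0n.
have le1_qSn_q : (1 <= q ^ n.+1 + q)%N by rewrite (leq_trans q_gt0) ?leq_addl.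
rewrite natrM (natrB _ le1_qSn_q) natrD !natrX.
rewrite (_ : 2 * n.+1 = (n + n).+2)%N; last by rewrite mul2n -addnn addSn addnS.
by rewrite !exprS exprD; field.
Qed.

End CountUnipotentOrbits.

Theorem lemma4p2 (p n : nat) :
  prime p -> (1 <= n)%N ->
  F p n = ((p ^ n.-1 * (p ^ n + p - 1))%N)%:Z.
Proof.
move=> p_pr; case: n => [//|n] _.
have r_count m : r p m = SL_orbit_count 'F_p m.
  by rewrite /r /SL_orbit_count (eq_imset _ (@sl2_orbitE p m)).
by rewrite /F !r_count SL_orbit_countS U_orbit_countS card_Fp // PoszD addrAC subrr add0r.
Qed.
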